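(* Let $S\subseteq\mathbb{R}[\underline x]$. If $\operatorname{QM}(S)$ is archimedean in $\mathbb{R}[\underline x]$, then $\operatorname{qm}(S,\emptyset)$ is archimedean in $\mathscr{M}$ and $\operatorname{QM}(S,\emptyset)$ is archimedean in $\mathscr{M}[\underline x]$.
   Context: Let $\mathbb{R}[\underline x]=\mathbb{R}[x_1,\dots,x_n]$, $\mathscr{M}=\mathbb{R}[\mathtt{m}_{i_1,\dots,i_n}\colon (i_1,\dots,i_n)\in\mathbb{N}_0^n]$ the polynomial ring in countably many indeterminates with $\mathtt{m}_{0,\dots,0}:=1$, $\mathscr{M}[\underline x]=\mathscr{M}\otimes_{\mathbb{R}}\mathbb{R}[\underline x]$, and $\mathtt{m}:\mathscr{M}[\underline x]\to\mathscr{M}$ the unique $\mathscr{M}$-linear map with $\mathtt{m}(x_1^{i_1}\cdots x_n^{i_n})=\mathtt{m}_{i_1,\dots,i_n}$. A quadratic module in a commutative unital ring $A$ is a subset $M$ with $1\in M$, $M+M\subseteq M$, $a^2M\subseteq M$ for $a\in A$; it is archimedean if for every $a\in A$ there is $N\in\mathbb{N}$ with $N\pm a\in M$. $\operatorname{QM}(S)$ is the quadratic module of $\mathbb{R}[\underline x]$ generated by $S$; $\operatorname{qm}(S,\emptyset)$ is the quadratic module of $\mathscr{M}$ generated by $\{\mathtt{m}(f^2s)\colon s\in\{1\}\cup S,\ f\in\mathscr{M}[\underline x]\}$; $\operatorname{QM}(S,\emptyset)$ is the quadratic module of $\mathscr{M}[\underline x]$ generated by $S\cup\{\mathtt{m}(f^2s)\colon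 s\in\{1\}\cup S,\ f\in\mathscr{M}[\underline x]\}$. *)

From HB Require Import structures.
From mathcomp Require Import all_boot all_order all_algebra.
From mathcomp Require Import reals.
From mathcomp Require Import finmap monalg.

Set Implicit Arguments.
Unset Strict Implicit.
Unset Printing Implicit Defensive.

Import Order.TTheory GRing.Theory Num.Theory.
Local Open Scope ring_scope.

Definition is_qmodule (A : comPzRingType) (M : A -> Prop) : Prop :=
  [/\ M 1,
      (forall a b, M a -> M b -> M (a + b)) &
      (forall a b, M b -> M (a ^+ 2 * b))].

Definition qmod_gen (A : comPzRingType) (G : A -> Prop) : A -> Prop :=
  fun a => forall M : A -> Prop, is_qmodule M -> (forall g, G g -> M g) -> M a.

Definition qm_archimedean (A : comPzRingType) (M : A -> Prop) : Prop :=
  forall a : A, exists N : nat, M (N%:R + a) /\ M (N%:R - a).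

(* A monomial x_1^{i_1} ... x_n^{i_n} is an element of the commutative    *)
(* monomial type  cmonom 'I_n  (exponent vector (i_1,...,i_n)); the unit  *)
(* monomial 1%M corresponds to (0,...,0).                                 *)

Notation polyx R n := {malg R[cmonom 'I_n]}.

(* index set of the indeterminates m_{i_1,...,i_n} of \mathscr M:
   multi-indices different from (0,...,0) (since m_{0,...,0} := 1). *)
Definition midx (n : nat) := {a : cmonom 'I_n | a != @mone (cmonom 'I_n)}.

Notation Mring R n := {malg R[cmonom (midx n)]}.

(* \mathscr M[x] = \mathscr M \otimes_R R[x] = polynomials in x over \mathscr M *)
Notation Mpolyx R n := {malg (Mring R n)[cmonom 'I_n]}.

Section Moments.
Variables (R : realType) (n : nat).

Definition mvar (a : cmonom 'I_n) : Mring R n :=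
  match @insub _ (fun b : cmonom 'I_n => b != @mone (cmonom 'I_n)) (midx n) a with
  | Some b => << ucm b >>
  | None => 1
  end.

Definition mmap (p : Mpolyx R n) : Mring R n :=
  \sum_(k <- msupp p) p@_k * mvar k.

Definition emb_x (p : polyx R n) : Mpolyx R n :=
  \sum_(k <- msupp p) << (p@_k)%:MP *g k >>.

Definition emb_M (c : Mring R n) : Mpolyx R n := c%:MP.

Definition QM (S : polyx R n -> Prop) : polyx R n -> Prop := qmod_gen S.

Definition qm_generators (S : polyx R n -> Prop) : Mring R n -> Prop :=
  fun y => exists (s : polyx R n) (f : Mpolyx R n),
    (s = 1 \/ S s) /\ y = mmap (f ^+ 2 * emb_x s).

Definition qm_M (S : polyx R n -> Prop) : Mring R n -> Prop :=
  qmod_gen (qm_generators S).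

Definition QM_Mx (S : polyx R n -> Prop) : Mpolyx R n -> Prop :=
  qmod_gen (fun z : Mpolyx R n =>
    (exists s, S s /\ z = emb_x s) \/
    (exists y, qm_generators S y /\ z = emb_M y)).

End Moments.

From Pilot Require Import Defs.
From HB Require Import structures.
From mathcomp Require Import all_boot all_order all_algebra.
From mathcomp Require Import reals.
From mathcomp Require Import finmap monalg.
From mathcomp Require Import ring.

(* In a quadratic module [M] of a commutative algebra over an archimedean real
   closed field, the bounded elements (those [a] with [N +- a] in [M] for some
   integer [N]) contain the scalars and are closed under sums and products, by
   the identities [2K (K^2 - a^2) = (K - a)^2 (K + a) + (K + a)^2 (K - a)] and
   [4ab = (a + b)^2 - (a - b)^2].  So [M] is archimedean as soon as algebra
   generators are bounded.  For qm(S, {}) the generators are the [m_alpha]: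
   the moment map sends [f^2 p] into qm(S, {}) for every [p] in QM(S), and
   [N +- x^alpha] lies in QM(S).  For QM(S, {}) the generators are the
   constants of M, bounded by the first part, and the [x_i], bounded because
   QM(S) embeds into QM(S, {}). *)

Set Implicit Arguments.
Unset Strict Implicit.
Unset Printing Implicit Defensive.

Import Order.TTheory GRing.Theory Num.Theory.
Local Open Scope ring_scope.

Section QuadraticModuleGen.
Variables (A : comPzRingType) (G : A -> Prop).

Lemma qmod_gen_qmodule : is_qmodule (qmod_gen G).
Proof.
split=> [M [] //|a b Ga Gb M qmM GM|a b Gb M qmM GM].
  by case: (qmM) => _ MD _; apply: MD; [apply: Ga | apply: Gb].
by case: (qmM) => _ _ MX; apply: MX; apply: Gb.
Qed.

Lemma qmod_gen_sub g : G g -> qmod_gen G g.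
Proof. by move=> Gg M _; apply. Qed.

Lemma qmod_gen_min (M : A -> Prop) :
  is_qmodule M -> (forall g, G g -> M g) -> forall a, qmod_gen G a -> M a.
Proof. by move=> qmM GM a; apply. Qed.

End QuadraticModuleGen.

Section QuadraticModuleTheory.
Variables (A : comPzRingType) (M : A -> Prop).
Hypothesis qmM : is_qmodule M.

Lemma qmod1 : M 1. Proof. by case: qmM. Qed.

Lemma qmodD a b : M a -> M b -> M (a + b). Proof. by case: qmM => _ + _; apply. Qed.

Lemma qmodMsqr a b : M b -> M (a ^+ 2 * b). Proof. by case: qmM => _ _; apply. Qed.

Lemma qmod_sqr a : M (a ^+ 2).
Proof. by rewrite -[_ ^+ 2]mulr1; apply: qmodMsqr; apply: qmod1. Qed.

Lemma qmod_nat k : M k%:R.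
Proof.
elim: k => [|k IHk]; first by have := qmod_sqr 0; rewrite expr0n.
by rewrite -addn1 natrD; apply: qmodD IHk qmod1.
Qed.

Lemma qmod_natDl k a : M a -> M (k%:R + a).
Proof. by apply: qmodD; apply: qmod_nat. Qed.

Definition qm_bounded (a : A) := exists N : nat, M (N%:R + a) /\ M (N%:R - a).

Lemma qm_bounded_split a :
  (exists N : nat, M (N%:R + a)) -> (exists N : nat, M (N%:R - a)) -> qm_bounded a.
Proof.
move=> [N MNa] [K MKa]; exists (N + K)%N; split.
  by rewrite addnC natrD -addrA; apply: qmod_natDl.
by rewrite natrD -addrA; apply: qmod_natDl.
Qed.

Lemma qm_bounded_nat k : qm_bounded k%:R.
Proof.
apply: qm_bounded_split; first by exists 0%N; rewrite -natrD; apply: qmod_nat.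
by exists k; rewrite subrr; apply: (qmod_nat 0).
Qed.

Lemma qm_bounded_add a b : qm_bounded a -> qm_bounded b -> qm_bounded (a + b).
Proof.
move=> [N [MNa MNa']] [K [MKb MKb']]; exists (N + K)%N; rewrite natrD.
by split; [have := qmodD MNa MKb | have := qmodD MNa' MKb']; congr M; ring.
Qed.

Lemma qm_bounded_opp a : qm_bounded a -> qm_bounded (- a).
Proof. by move=> [N [MNa MNa']]; exists N; rewrite opprK. Qed.

Lemma qm_bounded_sum (I : Type) (r : seq I) (F : I -> A) :
  (forall i, qm_bounded (F i)) -> qm_bounded (\sum_(i <- r) F i).
Proof.
move=> bF; elim: r => [|i r IHr]; first by rewrite big_nil; apply: (qm_bounded_nat 0).
by rewrite big_cons; apply: qm_bounded_add.
Qed.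

Section RealScalars.
Variables (R : archiRcfType) (phi : {rmorphism R -> A}).

Lemma qmod_rmorph_ge0 c b : 0 <= c -> M b -> M (phi c * b).
Proof.
move=> c_ge0 Mb; rewrite -[c]sqr_sqrtr // rmorphXn.
exact: qmodMsqr.
Qed.

Lemma qmod_divn k b : (0 < k)%N -> M (k%:R * b) -> M b.
Proof.
move=> k_gt0 Mkb; have -> : b = phi k%:R^-1 * (k%:R * b).
  by rewrite mulrA -(rmorph_nat phi) -rmorphM mulVf ?pnatr_eq0 -?lt0n // rmorph1 mul1r.
by apply: qmod_rmorph_ge0; rewrite ?invr_ge0 ?ler0n.
Qed.

Lemma qm_bounded_rmorph c : qm_bounded (phi c).
Proof.
have /andP[c_le c_ge] : - (Num.bound `|c|)%:R <= c <= (Num.bound `|c|)%:R.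
  by rewrite -ler_norml ltW // archi_boundP.
apply: qm_bounded_split; exists (Num.bound `|c|).
  rewrite -(rmorph_nat phi) -rmorphD -[phi _]mulr1.
  by apply: qmod_rmorph_ge0; [rewrite addrC -lerBlDr sub0r | apply: qmod1].
rewrite -(rmorph_nat phi) -rmorphB -[phi _]mulr1.
by apply: qmod_rmorph_ge0; [rewrite subr_ge0 | apply: qmod1].
Qed.

Lemma qm_bounded_sqr a : qm_bounded a -> qm_bounded (a ^+ 2).
Proof.
move=> [N [MNa MNa']]; apply: qm_bounded_split.
  by exists 0%N; rewrite add0r; apply: qmod_sqr.
exists (N.+1 * N.+1)%N; apply: (@qmod_divn (N.+1 + N.+1)) => //.
have -> : (N.+1 + N.+1)%:R * ((N.+1 * N.+1)%:R - a ^+ 2) =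
    (N.+1%:R - a) ^+ 2 * (N.+1%:R + a) + (N.+1%:R + a) ^+ 2 * (N.+1%:R - a).
  by rewrite natrD natrM; ring.
by apply: qmodD; apply: qmodMsqr; rewrite -addn1 natrD -addrA addrCA;
  apply: qmod_natDl.
Qed.

Lemma qm_bounded_mul a b : qm_bounded a -> qm_bounded b -> qm_bounded (a * b).
Proof.
move=> ba bb; apply: qm_bounded_split.
  have [N [_ MN]] := qm_bounded_sqr (qm_bounded_add ba (qm_bounded_opp bb)).
  exists N; apply: (@qmod_divn 4) => //.
  have -> : 4%:R * (N%:R + a * b) = (a + b) ^+ 2 + (N%:R - (a - b) ^+ 2) + (3 * N)%:R.
    by rewrite natrM; ring.
  by apply: qmodD (qmodD (qmod_sqr _) MN) (qmod_nat _).
have [N [_ MN]] := qm_bounded_sqr (qm_bounded_add ba bb).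
exists N; apply: (@qmod_divn 4) => //.
have -> : 4%:R * (N%:R - a * b) = (a - b) ^+ 2 + (N%:R - (a + b) ^+ 2) + (3 * N)%:R.
  by rewrite natrM; ring.
by apply: qmodD (qmodD (qmod_sqr _) MN) (qmod_nat _).
Qed.

End RealScalars.
End QuadraticModuleTheory.

Section QuadraticModuleRmorph.
Variables (A B : comPzRingType) (f : {rmorphism A -> B}) (M' : B -> Prop).

Lemma qmod_gen_rmorph (G : A -> Prop) : is_qmodule M' ->
  (forall g, G g -> M' (f g)) -> forall a, qmod_gen G a -> M' (f a).
Proof.
move=> qmM' GM'; apply: qmod_gen_min => //; split=> [|a b Ma Mb|a b Mb] /=.
- by rewrite rmorph1; apply: qmod1.
- by rewrite rmorphD; apply: qmodD.
- by rewrite rmorphM rmorphXn; apply: qmodMsqr.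
Qed.

Lemma qm_bounded_map (M : A -> Prop) a : (forall b, M b -> M' (f b)) ->
  qm_bounded M a -> qm_bounded M' (f a).
Proof.
move=> MM' [N [MNa MNa']]; exists N.
by rewrite -(rmorph_nat f) -rmorphD -rmorphB; split; apply: MM'.
Qed.

End QuadraticModuleRmorph.

Lemma qmodule_moment_preimage (A B C : comPzRingType) (e : {rmorphism A -> B})
    (L : {additive B -> C}) (M : C -> Prop) :
  is_qmodule M -> (forall f, M (L (f ^+ 2 * e 1))) ->
  is_qmodule (fun a => forall f, M (L (f ^+ 2 * e a))).
Proof.
move=> qmM M1; split=> // [a b Ma Mb f|a b Mb f].
  by rewrite rmorphD mulrDr raddfD; apply: qmodD.
by rewrite rmorphM rmorphXn mulrA -exprMn; apply: Mb.
Qed.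

Lemma cmonom_ind (I : choiceType) (P : cmonom I -> Prop) :
  P mone -> (forall i m, P m -> P (mmul (ucm i) m)) -> forall m, P m.
Proof.
move=> P1 PM m; have [d] := ubnP (mdeg m); elim: d m => // d IHd m.
rewrite ltnS => le_md_d.
have [m0|[i im]] := fset_0Vmem (finsupp m).
  by rewrite (@mdeg_eq0I _ m) // mdegE m0 big_seq_fset0.
have Em : m = mmul (ucm i) (divcm m (ucm i)).
  apply/eqP/cmP => j; rewrite cmM divcmE cmU.
  by case: eqP => [<-|_]; [rewrite subnKC // lt0n cmE_neq0 | rewrite subn0].
rewrite Em; apply/PM/IHd.
by move: le_md_d; rewrite {1}Em mdegM mdegU.
Qed.

Section MalgMonomials.
Variables (K : monomType) (G : ringType).

Lemma malgU_mulC (c : G) (k : K) : << c *g k >> = c%:MP * << k >>.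
Proof. by rewrite malgM_def fgmulUU mulr1 mul1m. Qed.

Lemma malgUM (k1 k2 : K) : << mmul k1 k2 >> = << k1 >> * << k2 >> :> {malg G[K]}.
Proof. by rewrite malgM_def fgmulUU mulr1. Qed.

Definition malgU (k : K) : {malg G[K]} := << k >>.

Lemma malgU_is_mmorphism : mmorphism malgU.
Proof. by split=> // k1 k2; apply: malgUM. Qed.

HB.instance Definition _ := isMultiplicative.Build K {malg G[K]} malgU
  malgU_is_mmorphism.

End MalgMonomials.

Arguments malgU {K G}.

Lemma qm_archimedean_malg (R : archiRcfType) (I : choiceType) (G : comNzRingType)
    (phi : {rmorphism R -> {malg G[cmonom I]}}) (M : {malg G[cmonom I]} -> Prop) :
  is_qmodule M -> (forall c : G, qm_bounded M c%:MP) ->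
  (forall i : I, qm_bounded M << ucm i >>) -> qm_archimedean M.
Proof.
move=> qmM bC bU p; rewrite (monalgE p); apply: (qm_bounded_sum qmM) => k.
rewrite malgU_mulC; apply: (qm_bounded_mul qmM phi); first exact: bC.
elim/cmonom_ind: k => [|i k IHk]; first exact: bC.
(* Plain [exact]: ssreflect's [apply:] diverges unifying the ring instances. *)
rewrite malgUM; exact (qm_bounded_mul qmM phi (bU i) IHk).
Qed.

Section Moments.
Variables (R : realType) (n : nat).

Lemma mvar1 : mvar R (@mone (cmonom 'I_n)) = 1.
Proof. by rewrite /mvar insubF //= eqxx. Qed.

Lemma mvar_val (b : midx n) : mvar R (val b) = << ucm b >>.
Proof. by rewrite /mvar valK. Qed.

Lemma mmap_idfunE (p : Mpolyx R n) : Defs.mmap p = monalg.mmap idfun (@mvar R n) p.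
Proof. by []. Qed.

HB.instance Definition _ := GRing.isAdditive.Build (Mpolyx R n) (Mring R n)
  (@Defs.mmap R n) (raddfB (monalg.mmap idfun (@mvar R n))).

Lemma emb_xE (p : polyx R n) :
  emb_x p = monalg.mmap (malgC \o malgC : {rmorphism R -> Mpolyx R n}) malgU p.
Proof. by rewrite /emb_x mmapE; apply: eq_bigr => k _; rewrite malgU_mulC. Qed.

Lemma emb_x_is_additive : additive (@emb_x R n).
Proof. by move=> p q; rewrite !emb_xE raddfB. Qed.

Lemma emb_x_is_multiplicative : multiplicative (@emb_x R n).
Proof. by split=> [p q|]; rewrite !emb_xE (rmorphM, rmorph1). Qed.

HB.instance Definition _ := GRing.isAdditive.Build (polyx R n) (Mpolyx R n) (@emb_x R n)
  emb_x_is_additive.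
HB.instance Definition _ := GRing.isMultiplicative.Build (polyx R n) (Mpolyx R n)
  (@emb_x R n) emb_x_is_multiplicative.

Lemma emb_xU (k : cmonom 'I_n) : emb_x (<< k >> : polyx R n) = << k >>.
Proof. by rewrite emb_xE mmapU /= !mpolyC1E mul1r. Qed.

Lemma mmap_emb_x (p : polyx R n) :
  Defs.mmap (emb_x p) = monalg.mmap malgC (@mvar R n) p.
Proof.
by rewrite mmap_idfunE /emb_x raddf_sum mmapE; apply: eq_bigr => k _; rewrite /= mmapU.
Qed.

End Moments.

Section Archimedean.
Variables (R : realType) (n : nat) (S : polyx R n -> Prop).

Lemma QM_moment p : QM S p -> forall f, qm_M S (Defs.mmap (f ^+ 2 * emb_x p)).
Proof.
have gen1 (f : Mpolyx R n) : qm_M S (Defs.mmap (f ^+ 2 * emb_x 1)).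
  by apply: qmod_gen_sub; exists 1, f; split; [left|].
(* Inferring these instances through the nested [malg] types diverges. *)
have qmT := @qmodule_moment_preimage (polyx R n) (Mpolyx R n) (Mring R n)
  (@emb_x R n) (@Defs.mmap R n) (qm_M S) (qmod_gen_qmodule _) gen1.
move: p; apply: (qmod_gen_min qmT) => s Ss f.
by apply: qmod_gen_sub; exists s, f; split; [right|].
Qed.

Lemma qm_M_bounded_mvar : qm_archimedean (QM S) ->
  forall k, qm_bounded (qm_M S) (mvar R k).
Proof.
move=> archQM k; have [N [MNk MNk']] := archQM << k >>.
have mmapNE : monalg.mmap malgC (@mvar R n) N%:R = N%:R.
  by rewrite -[X in monalg.mmap _ _ X]mpolyC_nat mmapU mvar1 mulr1 /= mpolyC_nat.
have mmapUE : monalg.mmap malgC (@mvar R n) << k >> = mvar R k.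
  by rewrite mmapU /= mpolyC1E mul1r.
exists N; split.
- by have := QM_moment MNk 1; rewrite expr1n mul1r mmap_emb_x raddfD /= mmapNE mmapUE.
- by have := QM_moment MNk' 1; rewrite expr1n mul1r mmap_emb_x raddfB /= mmapNE mmapUE.
Qed.

Lemma qm_M_archimedean : qm_archimedean (QM S) -> qm_archimedean (qm_M S).
Proof.
move=> archQM; have qmM : is_qmodule (qm_M S) := qmod_gen_qmodule _.
apply: (qm_archimedean_malg malgC qmM) => [c|b].
  exact: (qm_bounded_rmorph qmM malgC).
by rewrite -mvar_val; apply: qm_M_bounded_mvar.
Qed.

Lemma QM_Mx_archimedean : qm_archimedean (QM S) -> qm_archimedean (qm_M S) ->
  qm_archimedean (QM_Mx S).
Proof.
move=> archQM archqm; have qmX : is_qmodule (QM_Mx S) := qmod_gen_qmodule _.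
have QM_sub : forall p, QM S p -> QM_Mx S (emb_x p).
  by apply: qmod_gen_rmorph qmX _ => s Ss; apply: qmod_gen_sub; left; exists s.
have qm_M_sub : forall c, qm_M S c -> QM_Mx S c%:MP.
  by apply: qmod_gen_rmorph qmX _ => c qmc; apply: qmod_gen_sub; right; exists c.
apply: (qm_archimedean_malg (malgC \o malgC : {rmorphism R -> _}) qmX) => [c|i].
  exact: qm_bounded_map qm_M_sub (archqm c).
by rewrite -emb_xU; apply: qm_bounded_map QM_sub (archQM _).
Qed.

End Archimedean.

Theorem lemma4p1 (R : realType) (n : nat) (S : polyx R n -> Prop) :
  qm_archimedean (QM S) ->
  qm_archimedean (qm_M S) /\ qm_archimedean (QM_Mx S).
Proof.
move=> archQM; have archqm := qm_M_archimedean archQM.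
by split; last exact: QM_Mx_archimedean.
Qed.
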